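(* Let $S^P$ denote the complexity function of the family of maximal configurations resistant to predators (in the one-dimensional Riviera model). Then for every $\rho$ with $\frac{1}{2} < \rho < \frac{2}{3}$, $$S^P(\rho) = (1 - \rho) \ln(1 - \rho) - (2\rho - 1) \ln(2\rho - 1) - (2 - 3\rho) \ln(2 - 3\rho).$$
   Context: A configuration of length $n\ge 0$ is a binary string $c_1c_2\cdots c_n$; $c_k=1$ means lot $k$ is occupied by a house, $c_k=0$ that it is empty. A house at position $k$ is blocked (from sunlight) if $2\le k\le n-1$ and $c_{k-1}=c_{k+1}=1$; lots beyond the ends of the string never obstruct sunlight. A configuration is permissible if no house is blocked. It is maximal (jammed) if it is permissible and, for every $k$ with $c_k=0$, the string obtained by setting $c_k=1$ is not permissible. A maximal configuration is resistant to predators if, for every $k$ with $c_k=0$, in the string obtained by setting $c_k=1$ the new house at position $k$ is blocked. Let $J_{k,n}$ be the number of such configurations of length $n$ with exactly $k$ occupied lots; whenever $J_{k,n}=0$ it is redefined to be $1$. The complexity function is $S(\rho)=\sup \limsup_{i\to\infty} \frac{\ln J_{k_i,n_i}}{n_i}$, where the supremum ranges over all sequences $((k_i,n_i))_i$ of pairs of non-negative integers with $n_i\to\infty$ and $k_i/n_i\to\rho$. *)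

From HB Require Import structures.
From mathcomp Require Import all_boot all_order all_algebra.
From mathcomp Require Import all_classical all_reals all_analysis.
Set Implicit Arguments. Unset Strict Implicit. Unset Printing Implicit Defensive.
Import Order.TTheory GRing.Theory Num.Theory numFieldNormedType.Exports.
Local Open Scope classical_set_scope.
Local Open Scope ring_scope.

(* A configuration is a seq bool c; lot k (0-indexed, k < size c) is occupied
   iff nth false c k.  Positions beyond the ends never obstruct sunlight. *)

(* position k (0-indexed) is surrounded by houses on both sides
   (i.e. 2 <= k+1 <= n-1 in 1-indexed terms) *)
Definition surrounded (c : seq bool) (k : nat) : bool :=
  [&& (0 < k)%N, (k.+1 < size c)%N, nth false c k.-1 & nth false c k.+1].

Definition blocked_house (c : seq bool) (k : nat) : bool :=
  nth false c k && surrounded c k.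

Definition permissible (c : seq bool) : bool :=
  [forall k : 'I_(size c), ~~ blocked_house c k].

Definition maximal (c : seq bool) : bool :=
  permissible c &&
  [forall k : 'I_(size c), ~~ nth false c k ==> ~~ permissible (set_nth false c k true)].

Definition resistant (c : seq bool) : bool :=
  maximal c &&
  [forall k : 'I_(size c), ~~ nth false c k ==>
      blocked_house (set_nth false c k true) k].

(* J_{k,n}, with 0 redefined to 1 *)
Definition J (k n : nat) : nat :=
  let m := #|[set c : n.-tuple bool | resistant c && (count id c == k)%N]| in
  if m == 0%N then 1 else m.

Definition admissible {R : realType} (rho : R) (kn : nat -> nat * nat) : Prop :=
  ((fun i => ((kn i).2)%:R : R) @ \oo --> +oo) /\
  ((fun i => ((kn i).1)%:R / ((kn i).2)%:R : R) @ \oo --> rho).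

Definition SP {R : realType} (rho : R) : \bar R :=
  ereal_sup [set limn_esup (fun i => (ln ((J (kn i).1 (kn i).2)%:R : R)
                                        / ((kn i).2)%:R)%:E)
            | kn in [set kn | admissible rho kn]].

From mathcomp Require Import all_boot all_order all_algebra.
From mathcomp Require Import all_classical all_reals all_analysis.
From mathcomp Require Import zify ring lra.
Import Order.TTheory GRing.Theory Num.Theory numFieldNormedType.Exports.
Set Implicit Arguments. Unset Strict Implicit. Unset Printing Implicit Defensive.

(* A configuration is resistant iff each lot is occupied exactly when it is not
   between two houses.  Such configurations are the words made of runs [1] and
   [11] separated by single empty lots; with k houses among n lots there are
   n + 1 - k runs, 2k - n - 1 of them doubled, so J k n is a binomial
   coefficient.  Since the term of index a is the largest of the expansion of
   (a + b)^(a + b), ln C(a + b, a) is a ln((a + b)/a) + b ln((a + b)/b) up to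
   ln(a + b + 1), and ln J / n converges along every admissible sequence to
   this entropy evaluated at the limiting proportions 2rho - 1 and 2 - 3rho of
   doubled and single runs. *)

Lemma surroundedE c k :
  surrounded c k = nth false (false :: c) k && nth false c k.+1.
Proof.
rewrite /surrounded; case: k => [|k] //=.
by case: ltnP => // /(nth_default false) ->; rewrite !andbF.
Qed.

Lemma surrounded_set_nth c k b : k < size c ->
  surrounded (set_nth false c k b) k = surrounded c k.
Proof.
rewrite !surroundedE; case: k => [|k] kc //=.
by rewrite !nth_set_nth /= (ltn_eqF (ltnSn k)) (gtn_eqF (ltnSn k.+1)).
Qed.

Lemma resistantE c :
  resistant c = all (fun k => nth false c k == ~~ surrounded c k) (iota 0 (size c)).
Proof.
have blocked_new k : k < size c ->
    blocked_house (set_nth false c k true) k = surrounded c k.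
  by move=> kc; rewrite /blocked_house nth_set_nth /= eqxx surrounded_set_nth.
apply/idP/allP => [|occ].
- case/andP=> /andP[/forallP perm _] /forallP hole k.
  rewrite mem_iota add0n => /= kc.
  move: (perm (Ordinal kc)) (hole (Ordinal kc)); rewrite /= blocked_new //.
  by rewrite /blocked_house; case: nth => /= [/negbTE -> | _ ->].
- have {}occ k : k < size c -> nth false c k = ~~ surrounded c k.
    by move=> kc; apply/eqP/occ; rewrite mem_iota add0n.
  have perm : permissible c.
    by apply/forallP => k; rewrite /blocked_house occ //; case: surrounded.
  rewrite /resistant /maximal perm /=; apply/andP; split; apply/forallP => k;
    apply/implyP; rewrite occ // negbK => sk.
    have sz : size (set_nth false c k true) = size c.
      by rewrite size_set_nth; apply/maxn_idPr.
    by apply/forallPn; exists (cast_ord (esym sz) k); rewrite negbK /= blocked_new.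
  by rewrite blocked_new.
Qed.

(* [l] is the lot to the left of [x]; lots past the right end are empty. *)
Fixpoint scan_resistant (l x : bool) (s : seq bool) : bool :=
  if s is y :: s' then (x == ~~ (l && y)) && scan_resistant x y s' else x.

Lemma scan_resistantE l x s : scan_resistant l x s =
  all (fun k => nth false (x :: s) k ==
                ~~ (nth false (l :: x :: s) k && nth false (x :: s) k.+1))
      (iota 0 (size s).+1).
Proof.
elim: s l x => [|y s IH] l x /=; first by case: l x => [] [].
by rewrite IH /= (iotaDl 1 1) all_map.
Qed.

Lemma resistant_cons x s : resistant (x :: s) = scan_resistant false x s.
Proof.
rewrite resistantE scan_resistantE; apply: eq_in_all => k.
by rewrite mem_iota surroundedE.
Qed.

Lemma resistant_TF s : resistant [:: true, false & s] = (s != [::]) && resistant s.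
Proof. by case: s => [|[] [|y s]]; rewrite !resistant_cons. Qed.

Lemma resistant_TTF s :
  resistant [:: true, true, false & s] = (s != [::]) && resistant s.
Proof. by case: s => [|[] [|y s]]; rewrite !resistant_cons. Qed.

Lemma resistant_F s : resistant (false :: s) = false.
Proof. by case: s => [|y s]; rewrite resistant_cons. Qed.

(* A block word lists the runs of houses from left to right, [true] for a run
   [11] and [false] for a single house; consecutive runs are separated by one
   empty lot. *)
Definition house_run (x : bool) : seq bool :=
  if x then [:: true; true] else [:: true].

Fixpoint config_of_blocks (b : seq bool) : seq bool :=
  if b is x :: b' then
    if b' is [::] then house_run x else house_run x ++ false :: config_of_blocks b'
  else [::].

Fixpoint blocks_of_config (c : seq bool) : seq bool :=
  match c with
  | true :: true :: false :: c' => true :: blocks_of_config c'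
  | true :: false :: c' => false :: blocks_of_config c'
  | [:: true; true] => [:: true]
  | [:: true] => [:: false]
  | _ => [::]
  end.

Lemma config_of_blocksK : cancel config_of_blocks blocks_of_config.
Proof. by elim=> [|[] [|y b] IH] //=; rewrite IH. Qed.

Lemma config_of_blocks_cons2 x y b :
  config_of_blocks [:: x, y & b] = house_run x ++ false :: config_of_blocks (y :: b).
Proof. by []. Qed.

Lemma config_of_blocks_eq0 b : (config_of_blocks b == [::]) = (b == [::]).
Proof. by case: b => [|[] [|y b]]. Qed.

Lemma resistant_config_of_blocks b : resistant (config_of_blocks b).
Proof.
elim: b => [|x [|y b] IH]; first by rewrite resistantE.
  by case: x; rewrite resistant_cons.
rewrite config_of_blocks_cons2.
by case: x; rewrite ?resistant_TF ?resistant_TTF config_of_blocks_eq0 IH.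
Qed.

Lemma size_config_of_blocks b :
  size (config_of_blocks b) = (2 * size b + count id b).-1.
Proof.
elim: b => [|x [|y b] IH] //; first by case: x.
by rewrite config_of_blocks_cons2 size_cat /= IH /=; case: x => /=; lia.
Qed.

Lemma count_config_of_blocks b :
  count id (config_of_blocks b) = size b + count id b.
Proof.
elim: b => [|x [|y b] IH] //; first by case: x.
by rewrite config_of_blocks_cons2 count_cat /= IH /=; case: x => /=; lia.
Qed.

Lemma blocks_of_configK c : resistant c -> c != [::] ->
  config_of_blocks (blocks_of_config c) = c.
Proof.
have [n] := ubnP (size c); elim: n c => // n IH c.
have house_run_cons x c' : size c' < n -> resistant c' -> c' != [::] ->
    config_of_blocks (x :: blocks_of_config c') = house_run x ++ false :: c'.
  move=> /IH e /e {}e /[dup] /e; case: blocks_of_config => [<-|y b <-] //.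
case: c => [|[] c] //; last by rewrite resistant_F.
case: c => [|[] c] //; last first.
  move=> /= sz; rewrite resistant_TF => /andP[nc rc] _.
  exact: (house_run_cons false c (ltnW sz) rc nc).
case: c => [|[] c] //; first by rewrite resistant_cons.
move=> /= sz; rewrite resistant_TTF => /andP[nc rc] _.
exact: (house_run_cons true c (ltnW (ltnW sz)) rc nc).
Qed.

Lemma card_count_tuples m j :
  #|[set t : m.-tuple bool | count id t == j]| = 'C(m, j).
Proof.
rewrite -[m in 'C(m, _)]card_ord -card_draws.
pose f (S : {set 'I_m}) := [tuple i \in S | i < m].
have count_f S : count id (f S) = #|S|.
  by rewrite count_map val_ord_tuple cardE enumT /enum_mem size_filter.
have f_inj : injective f.
  move=> S1 S2 e; apply/setP => i.
  by move/(congr1 (fun t => tnth t i)): e; rewrite !tnth_mktuple.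
rewrite -(card_imset [set S : {set 'I_m} | #|S| == j] f_inj).
apply: eq_card => t; rewrite inE.
apply/idP/imsetP => [ct | [S]]; last by rewrite inE => /eqP <- ->; rewrite count_f.
have e : t = f [set i | tnth t i].
  by apply: eq_from_tnth => i; rewrite tnth_mktuple inE.
by exists [set i | tnth t i]; rewrite // inE -count_f -e.
Qed.

Lemma card_resistant n k : n < 2 * k -> 3 * k <= 2 * n.+1 ->
  #|[set c : n.-tuple bool | resistant c && (count id c == k)]| =
  'C(n.+1 - k, 2 * k - n.+1).
Proof.
move=> lo hi; set m := n.+1 - k; set j := 2 * k - n.+1.
pose g (b : m.-tuple bool) : n.-tuple bool :=
  insubd (nseq_tuple n false) (config_of_blocks b).
have g_val (b : m.-tuple bool) : count id b = j -> val (g b) = config_of_blocks b.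
  move=> cb; rewrite val_insubd size_config_of_blocks size_tuple cb.
  by rewrite (_ : (2 * m + j).-1 = n) ?eqxx // /m /j; lia.
rewrite -card_count_tuples -(card_in_imset (f := g)); last first.
  move=> b1 b2; rewrite !inE => /eqP c1 /eqP c2 e; apply: val_inj.
  by rewrite /= -[val b1]config_of_blocksK -g_val // e g_val // config_of_blocksK.
apply: eq_card => c; rewrite !inE; apply/idP/imsetP.
- case/andP => rc /eqP cc.
  have nc : val c != [::] by rewrite -size_eq0 size_tuple; lia.
  have e := blocks_of_configK rc nc.
  have := size_config_of_blocks (blocks_of_config c).
  have := count_config_of_blocks (blocks_of_config c).
  rewrite e size_tuple cc => cnt sz.
  have sb : size (blocks_of_config c) == m by apply/eqP; lia.
  have cb : count id (blocks_of_config c) = j by lia.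
  by exists (Tuple sb); [rewrite inE cb | apply: val_inj; rewrite g_val].
- case=> b; rewrite inE => /eqP cb ->.
  rewrite g_val // resistant_config_of_blocks count_config_of_blocks size_tuple cb.
  by apply/eqP; lia.
Qed.

Lemma J_binomial n k : n < 2 * k -> 3 * k <= 2 * n.+1 ->
  J k n = 'C(n.+1 - k, 2 * k - n.+1).
Proof.
move=> lo hi; have C_gt0 : 0 < 'C(n.+1 - k, 2 * k - n.+1) by rewrite bin_gt0; lia.
set A := [set c : n.-tuple bool | resistant c && (count id c == k)].
rewrite /J (eq_card (B := A)); first by rewrite card_resistant // (gtn_eqF C_gt0).
by move=> c; rewrite inE; exact: asboolb.
Qed.

Section BinomialEntropyBounds.
Variables a b : nat.

Let term i := 'C(a + b, i) * (b ^ (a + b - i) * a ^ i).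

Let expnDn_term : (a + b) ^ (a + b) = \sum_(i < (a + b).+1) term i.
Proof. by rewrite {1}[a + b]addnC expnDn. Qed.

Let term_a : term a = 'C(a + b, a) * (a ^ a * b ^ b).
Proof. by rewrite /term addKn [b ^ b * _]mulnC. Qed.

Lemma bin_expnn_upper : 'C(a + b, a) * (a ^ a * b ^ b) <= (a + b) ^ (a + b).
Proof.
have a_lt : a < (a + b).+1 by rewrite ltnS leq_addr.
rewrite expnDn_term (bigD1 (Ordinal a_lt)) //= -term_a; exact: leq_addr.
Qed.

Hypothesis b_gt0 : 0 < b.

Let term_ratio i : i < a + b ->
  i.+1 * b * term i.+1 = (a + b - i) * a * term i.
Proof.
move=> i_lt; rewrite /term.
have e1 : i.+1 * 'C(a + b, i.+1) = (a + b - i) * 'C(a + b, i) by rewrite mul_bin_left.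
have e2 : b ^ (a + b - i) = b * b ^ (a + b - i.+1) by rewrite -expnS subnSK.
rewrite e2 [a ^ i.+1]expnS.
transitivity (i.+1 * 'C(a + b, i.+1) * b * b ^ (a + b - i.+1) * a * a ^ i); first ring.
by rewrite e1; ring.
Qed.

Let term_le_next i : i < a -> term i <= term i.+1.
Proof.
move=> i_lt; have pos : 0 < i.+1 * b by rewrite muln_gt0.
rewrite -(leq_pmul2l pos) term_ratio; last lia.
by rewrite leq_mul2r; apply/orP; right; nia.
Qed.

Let term_next_le i : a <= i -> i < a + b -> term i.+1 <= term i.
Proof.
move=> a_le i_lt; have pos : 0 < i.+1 * b by rewrite muln_gt0.
rewrite -(leq_pmul2l pos) term_ratio // leq_mul2r; apply/orP; right; nia.
Qed.

Let term_max i : i <= a + b -> term i <= term a.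
Proof.
move=> i_le; case: (leqP i a) => [i_le_a | a_lt_i].
  suff mono : {in [pred x | x <= a] &, {homo term : x y / x <= y}}.
    by apply: mono; rewrite ?inE.
  apply: homo_leq_in => //=.
  - exact: leq_trans.
  - by move=> x y _ y_le z /andP[_ /ltnW /leq_trans]; apply.
  - by move=> x _; exact: term_le_next.
suff mono : {in [pred x | a <= x <= a + b] &, {homo term : x y / x <= y >-> y <= x}}.
  by apply: mono; rewrite ?inE ?leqnn ?leq_addr ?i_le // ltnW.
apply: (@homo_leq_in nat _ term (fun x y => y <= x)) => //=.
- by move=> y x z h1 h2; exact: leq_trans h2 h1.
- move=> x y /andP[ax _] /andP[_ yb] z /andP[xz zy].
  by rewrite inE /= (leq_trans ax (ltnW xz)) (leq_trans (ltnW zy) yb).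
- by move=> x /andP[ax _] /andP[_ xb]; exact: term_next_le.
Qed.

Lemma bin_expnn_lower :
  (a + b) ^ (a + b) <= (a + b).+1 * ('C(a + b, a) * (a ^ a * b ^ b)).
Proof.
rewrite expnDn_term -term_a -[X in X * _]card_ord -sum_nat_const.
by apply: leq_sum => i _; apply: term_max; rewrite -ltnS.
Qed.

End BinomialEntropyBounds.

Local Open Scope ring_scope.
Local Open Scope classical_set_scope.

Definition xlnx {R : realType} (x : R) : R := x * ln x.

Definition entropy2 {R : realType} (x y : R) : R := xlnx (x + y) - xlnx x - xlnx y.

Section Entropy.
Variable R : realType.
Implicit Types (x y N : R) (a b n : nat).

Lemma entropy2_div x y N : 0 < x -> 0 < y -> 0 < N ->
  entropy2 (x / N) (y / N) = entropy2 x y / N.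
Proof.
move=> x_gt0 y_gt0 N_gt0; have N_neq0 : N != 0 by rewrite gt_eqF.
by rewrite /entropy2 /xlnx -mulrDl !ln_div ?posrE ?addr_gt0 //; field.
Qed.

Lemma ln_expnn n : ln ((n ^ n)%:R : R) = xlnx n%:R.
Proof.
case: n => [|n]; first by rewrite expn0 ln1 /xlnx mul0r.
by rewrite natrX lnXn ?ltr0n // /xlnx mulr_natl.
Qed.

Let expnn_gt0 n : (0 < n ^ n)%N.
Proof. by case: n => // n; rewrite expn_gt0. Qed.

Let ln_binomial_term a b :
  ln (('C(a + b, a) * (a ^ a * b ^ b))%:R : R) =
  ln ('C(a + b, a)%:R : R) + xlnx a%:R + xlnx b%:R.
Proof.
rewrite -!ln_expnn natrM lnM ?posrE ?ltr0n ?muln_gt0 ?bin_gt0 ?leq_addr ?expnn_gt0 //.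
by rewrite natrM lnM ?posrE ?ltr0n ?expnn_gt0 // addrA.
Qed.

Lemma ln_binomial_le a b : ln ('C(a + b, a)%:R : R) <= entropy2 a%:R b%:R.
Proof.
have := bin_expnn_upper a b; rewrite -(ler_nat R) => ineq.
rewrite -ler_ln ?posrE ?ltr0n ?muln_gt0 ?bin_gt0 ?leq_addr ?expnn_gt0 // in ineq.
by move: ineq; rewrite ln_binomial_term ln_expnn natrD /entropy2; lra.
Qed.

Lemma ln_binomial_ge a b : (0 < b)%N ->
  entropy2 a%:R b%:R - ln ((a + b).+1%:R : R) <= ln ('C(a + b, a)%:R : R).
Proof.
move=> b_gt0; have := bin_expnn_lower a b_gt0; rewrite -(ler_nat R) => ineq.
rewrite -ler_ln ?posrE ?ltr0n ?muln_gt0 ?bin_gt0 ?leq_addr ?expnn_gt0 // in ineq.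
move: ineq; rewrite natrM lnM ?posrE ?ltr0n ?muln_gt0 ?bin_gt0 ?leq_addr ?expnn_gt0 //.
by rewrite ln_binomial_term ln_expnn natrD /entropy2; lra.
Qed.

End Entropy.

(* [2x - 1 - 1/n] and [2 - 3x + 2/n] are the proportions of doubled and single
   runs. *)
Lemma ln_J_bounds (R : realType) (n k : nat) :
  let x : R := k%:R / n%:R in
  let e := entropy2 (2 * x - 1 - n%:R^-1) (2 - 3 * x + 2 * n%:R^-1) in
  (0 < n)%N -> 0 < 2 * x - 1 - n%:R^-1 -> 0 < 2 - 3 * x + 2 * n%:R^-1 ->
  e - ln n%:R / n%:R <= ln (J k n)%:R / n%:R <= e.
Proof.
move=> x e n_gt0 a_gt0 b_gt0; set N : R := n%:R; set K : R := k%:R.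
have N_gt0 : 0 < N by rewrite ltr0n.
have N_neq0 : N != 0 by rewrite gt_eqF.
have aN : (2 * x - 1 - N^-1) * N = 2 * K - N - 1 by rewrite /x; field.
have bN : (2 - 3 * x + 2 * N^-1) * N = 2 * N + 2 - 3 * K by rewrite /x; field.
have lo : (n.+1 < 2 * k)%N.
  rewrite -(ltr_nat R) natrM -natr1 -/N -/K; nra.
have hi : (3 * k < 2 * n.+1)%N.
  rewrite -(ltr_nat R) !natrM -natr1 -/N -/K; nra.
rewrite J_binomial ?(ltnW lo) ?(ltnW hi) //.
set j := (2 * k - n.+1)%N; set d := (2 * n.+1 - 3 * k)%N.
rewrite (_ : (n.+1 - k = j + d)%N); last by rewrite /j /d; lia.
have jN : j%:R / N = 2 * x - 1 - N^-1.
  rewrite -[RHS](mulfK N_neq0) aN /j natrB ?(ltnW lo) // natrM -natr1 -/N -/K.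
  by ring.
have dN : d%:R / N = 2 - 3 * x + 2 * N^-1.
  rewrite -[RHS](mulfK N_neq0) bN /d natrB ?(ltnW hi) // !natrM -natr1 -/N -/K.
  by ring.
have eE : e = entropy2 j%:R d%:R / N.
  by rewrite /e -jN -dN entropy2_div ?ltr0n // /j /d subn_gt0.
have ln_le : ln ((j + d).+1%:R : R) <= ln N.
  by rewrite ler_ln ?posrE ?ltr0n // ler_nat /j /d; lia.
have d_gt0 : (0 < d)%N by rewrite subn_gt0.
have := ln_binomial_le R j d; have := ln_binomial_ge R j d_gt0.
rewrite eE => ge le; apply/andP; split; last by rewrite ler_pM2r ?invr_gt0.
by rewrite -mulrBl ler_pM2r ?invr_gt0 //; lra.
Qed.

Section Asymptotics.
Variable R : realType.

Lemma ln_div_cvg0 (N : nat -> R) : N @ \oo --> +oo ->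
  (fun i => ln (N i) / N i) @ \oo --> 0.
Proof.
move=> N_cvg.
have N_ge1 : \forall i \near \oo, 1 <= N i by move/cvgryPge : N_cvg; apply.
have sqrtV_cvg : (fun i => 2 * Num.sqrt (N i)^-1) @ \oo --> 0.
  rewrite -(mulr0 2) -sqrtr0; apply: cvgM; first exact: cvg_cst.
  apply: (continuous_cvg _ (@sqrt_continuous R 0)); apply/gtr0_cvgV0 => //.
  by near=> i; apply: lt_le_trans ltr01 _; near: i.
apply: (squeeze_cvgr _ (cvg_cst 0) sqrtV_cvg); near=> i.
have N1 : 1 <= N i by near: i.
have N_gt0 : 0 < N i by apply: lt_le_trans N1.
set s := Num.sqrt (N i); have s_gt0 : 0 < s by rewrite sqrtr_gt0.
have Ns : N i = s * s by rewrite -expr2 sqr_sqrtr // ltW.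
have ln_s := ln_sublinear s_gt0.
rewrite sqrtrV ?(ltW N_gt0) // -/s divr_ge0 ?ln_ge0 ?(ltW N_gt0) //= ler_pdivrMr //.
rewrite Ns lnM ?posrE // (_ : 2 * s^-1 * (s * s) = 2 * s); first lra.
by field; rewrite gt_eqF.
Unshelve. all: by end_near.
Qed.

Lemma cvg_entropy2 {T} (F : set_system T) {FF : Filter F} (f g : T -> R) (a b : R) :
  0 < a -> 0 < b -> f @ F --> a -> g @ F --> b ->
  (fun t => entropy2 (f t) (g t)) @ F --> entropy2 a b.
Proof.
have xlnx_cont z : 0 < z -> {for z, continuous (@xlnx R)}.
  by move=> z_gt0; apply: continuousM; [exact: cvg_id | exact: continuous_ln].
move=> a_gt0 b_gt0 fa gb; apply: cvgB; first apply: cvgB.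
- by apply: (continuous_cvg _ (xlnx_cont _ (addr_gt0 a_gt0 b_gt0))); exact: cvgD.
- exact: (continuous_cvg _ (xlnx_cont _ a_gt0)).
- exact: (continuous_cvg _ (xlnx_cont _ b_gt0)).
Qed.

End Asymptotics.

Lemma cvg_ln_J (R : realType) (rho : R) kn : 1 / 2 < rho -> rho < 2 / 3 ->
  admissible rho kn ->
  (fun i => ln (J (kn i).1 (kn i).2)%:R / ((kn i).2)%:R) @ \oo -->
  entropy2 (2 * rho - 1) (2 - 3 * rho).
Proof.
move=> lo hi [N_cvg x_cvg].
set N := fun i => ((kn i).2)%:R : R in N_cvg *.
set x := fun i => ((kn i).1)%:R / N i in x_cvg.
pose a i := 2 * x i - 1 - (N i)^-1; pose b i := 2 - 3 * x i + 2 * (N i)^-1.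
have NV_cvg : (fun i => (N i)^-1) @ \oo --> 0.
  by apply/gtr0_cvgV0 => //; move/cvgryPgt : N_cvg; apply.
have a_cvg : a @ \oo --> 2 * rho - 1.
  rewrite -[X in _ --> X]subr0; apply: cvgB => //.
  by apply: cvgB; [apply: cvgM => //|]; exact: cvg_cst.
have b_cvg : b @ \oo --> 2 - 3 * rho.
  rewrite -[X in _ --> X]addr0 -(mulr0 2).
  apply: cvgD; last by apply: cvgM => //; exact: cvg_cst.
  by apply: cvgB; [|apply: cvgM => //]; exact: cvg_cst.
have a_gt0 : 0 < 2 * rho - 1 by lra.
have b_gt0 : 0 < 2 - 3 * rho by lra.
have e_cvg : (fun i => entropy2 (a i) (b i)) @ \oo -->
    entropy2 (2 * rho - 1) (2 - 3 * rho).
  exact: cvg_entropy2.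
have lower_cvg : (fun i => entropy2 (a i) (b i) - ln (N i) / N i) @ \oo -->
    entropy2 (2 * rho - 1) (2 - 3 * rho).
  by rewrite -[X in _ --> X]subr0; apply: cvgB => //; exact: ln_div_cvg0.
apply: (squeeze_cvgr _ lower_cvg e_cvg).
near=> i; apply: ln_J_bounds.
- by rewrite -(ltr0n R); near: i; move/cvgryPgt : N_cvg; apply.
- by near: i; apply: cvgr_gt a_cvg _ a_gt0.
- by near: i; apply: cvgr_gt b_cvg _ b_gt0.
Unshelve. all: by end_near.
Qed.

Lemma admissible_truncn (R : realType) (rho : R) : 0 <= rho ->
  admissible rho (fun i => (Num.truncn (rho * i%:R), i)).
Proof.
move=> rho_ge0; split; first exact: cvgr_idn.
have iV_cvg : (fun i : nat => (i%:R : R)^-1) @ \oo --> 0.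
  apply/gtr0_cvgV0; last exact: cvgr_idn.
  by near=> i; rewrite ltr0n; near: i; exists 1%N.
have lower_cvg : (fun i : nat => rho - (i%:R)^-1) @ \oo --> rho.
  by rewrite -[X in _ --> X]subr0; apply: cvgB => //; exact: cvg_cst.
apply: (squeeze_cvgr _ lower_cvg (cvg_cst rho)); near=> i.
have i_gt0 : (0 : R) < i%:R by rewrite ltr0n; near: i; exists 1%N.
have /andP[] := truncn_itv (mulr_ge0 rho_ge0 (ltW i_gt0)).
rewrite -natr1 /= => t_le t_gt; apply/andP; split.
  by rewrite ler_pdivlMr // mulrBl mulVf ?gt_eqF //; lra.
by rewrite ler_pdivrMr.
Unshelve. all: by end_near.
Qed.

Lemma limn_esup_cvg (R : realType) (u : nat -> R) (l : R) : u @ \oo --> l ->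
  limn_esup (fun i => (u i)%:E) = l%:E.
Proof.
by move=> u_cvg; apply: (cvg_limn_einf_sup _).2; apply: cvg_EFin => //; exact: nearW.
Qed.

Theorem mainTheorem1 (R : realType) (rho : R) :
  1 / 2 < rho -> rho < 2 / 3 ->
  SP rho = ((1 - rho) * ln (1 - rho) - (2 * rho - 1) * ln (2 * rho - 1)
            - (2 - 3 * rho) * ln (2 - 3 * rho))%:E.
Proof.
move=> lo hi.
have -> : (1 - rho) * ln (1 - rho) - (2 * rho - 1) * ln (2 * rho - 1)
    - (2 - 3 * rho) * ln (2 - 3 * rho) = entropy2 (2 * rho - 1) (2 - 3 * rho).
  by rewrite /entropy2 /xlnx (_ : 2 * rho - 1 + (2 - 3 * rho) = 1 - rho) //; ring.
have adm0 : admissible rho (fun i => (Num.truncn (rho * i%:R), i)).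
  by apply: admissible_truncn; lra.
rewrite /SP; set S := (X in ereal_sup X).
suff -> : S = [set (entropy2 (2 * rho - 1) (2 - 3 * rho))%:E] by rewrite ereal_sup1.
apply/seteqP; split => [_ [kn adm <-] | _ ->] /=.
  exact: limn_esup_cvg (cvg_ln_J lo hi adm).
exists (fun i => (Num.truncn (rho * i%:R), i)) => //.
exact: limn_esup_cvg (cvg_ln_J lo hi adm0).
Qed.
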